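(* Let $\Phi:I\to O$ be a quantum channel and let $(\mathcal{E},W)$ be a Stinespring module related to $\Phi$. Regard $\mathcal{E}$ as a Hilbert space with inner product $\mathrm{tr}(\langle\cdot,\cdot\rangle_{O^{op}})$, and define $\pi:O\to B(\mathcal{E})$ and $V:H_{in}\to\mathcal{E}$ by $\pi(x)(\xi)=\xi*x$ (right $O^{op}$-multiplication in $\mathcal{E}$) and $V(\eta)=W(\eta\otimes 1)$. Then $(\pi,V,\mathcal{E})$ is a Stinespring representation of the unital completely positive map $\Phi^*:O\to I$. Moreover, if $(\mathcal{E},W)$ is minimal, then this Stinespring representation is minimal.
   Context: All Hilbert spaces are finite dimensional; inner products are linear in the second variable. $H_{in}=\bigoplus_a H^a_{in}$, $H_{out}=\bigoplus_b H^b_{out}$, $I=\bigoplus_a B(H^a_{in})\subseteq B(H_{in})$, $O=\bigoplus_b B(H^b_{out})\subseteq B(H_{out})$, with traces inherited from $B(H_{in})$, $B(H_{out})$ and Hilbert–Schmidt inner products. A quantum channel is a trace-preserving completely positive map $\Phi:I\to O$; $\Phi^*:O\to I$ is its Hilbert–Schmidt adjoint (a unital completely positive map). $e^a_i$ is an orthonormal basis of $H^a_{in}$, $e^a_{ij}$ the matrix units, $\theta_{\xi,\eta}(\eta')=\langle\eta,\eta'\rangle\xi$. $O^{op}$ is the opposite algebra of $O$ (product $a*b=ba$), a C*-algebra, with the same trace as $O$. Hilbert $O^{op}$-modules are right modules with $O^{op}$-valued inner products; $\mathcal{L}(\mathcal{M},\mathcal{N})$ denotes adjointable module maps. $\mathcal{M}_\Phi=H_{in}\otimes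 O^{op}$ with $(\xi\otimes a)*x=\xi\otimes(a*x)$ and $\langle\xi\otimes a,\eta\otimes b\rangle_{O^{op}}=\langle\xi,\eta\rangle a^**b$. $C_\Phi\in\mathcal{L}(\mathcal{M}_\Phi)$ is the $O^{op}$-linear map with $C_\Phi(e^a_j\otimes1)=\sum_i e^a_i\otimes\Phi(e^a_{ji})$. A Stinespring module related to $\Phi$ is a pair $(\mathcal{E},W)$ with $\mathcal{E}$ a Hilbert $O^{op}$-module and $W\in\mathcal{L}(\mathcal{M}_\Phi,\mathcal{E})$ such that $W^*W=C_\Phi$; it is minimal if the range of $W$ is dense in $\mathcal{E}$. A Stinespring representation of $\Phi^*$ is a triple $(\pi,V,K)$ with $K$ a Hilbert space, $\pi:O\to B(K)$ a C*-algebra homomorphism and $V:H_{in}\to K$ an isometry such that $\Phi^*(x)=V^*\pi(x)V$ for all $x\in O$; it is minimal if $K=\overline{\mathrm{span}}\{\pi(T)V\xi: T\in O,\xi\in H_{in}\}$. *)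

From HB Require Import structures.
From mathcomp Require Import all_boot all_order all_algebra.
Set Implicit Arguments. Unset Strict Implicit. Unset Printing Implicit Defensive.
Import Order.TTheory GRing.Theory Num.Theory.
Local Open Scope ring_scope.

Section Defs.
Variable C : numClosedFieldType.

Definition cadj m n (A : 'M[C]_(m, n)) : 'M[C]_(n, m) := (map_mx Num.conj A)^T.

Definition psd n (A : 'M[C]_n) : Prop := exists B : 'M[C]_n, A = cadj B *m B.

(* Block algebra  \bigoplus_a B(H^a) inside B(C^n): the orthonormal basis
   vector e_i belongs to the summand with label [lab i]. *)
Definition in_blocks n (lab : 'I_n -> nat) (A : 'M[C]_n) : Prop :=
  forall i j, lab i <> lab j -> A i j = 0.

Definition quantum_channel N M (bin : 'I_N -> nat) (bout : 'I_M -> nat)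
  (Phi : 'M[C]_N -> 'M[C]_M) : Prop :=
  [/\ forall x, in_blocks bin x -> in_blocks bout (Phi x),
      forall (a : C) x y, in_blocks bin x -> in_blocks bin y ->
        Phi (a *: x + y) = a *: Phi x + Phi y,
      forall x, in_blocks bin x -> \tr (Phi x) = \tr x &
      forall (k : nat) (X : 'I_k -> 'I_k -> 'M[C]_N),
        (forall i j, in_blocks bin (X i j)) ->
        psd (\mxblock_(i < k, j < k) X i j) ->
        psd (\mxblock_(i < k, j < k) Phi (X i j))].

Definition hs_adjoint N M (bin : 'I_N -> nat) (bout : 'I_M -> nat)
  (Phi : 'M[C]_N -> 'M[C]_M) (Phis : 'M[C]_M -> 'M[C]_N) : Prop :=
  forall y, in_blocks bout y ->
    in_blocks bin (Phis y) /\
    forall x, in_blocks bin x -> \tr (cadj (Phis y) *m x) = \tr (cadj y *m Phi x).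

(* Hilbert O^op-module structure on a (finite dimensional) complex vector
   space E: right O^op action [act xi x] (= xi * x) and O^op-valued inner
   product [ip]. The O^op product is a * b = b *m a. *)
Definition hilbert_Oop_module M (bout : 'I_M -> nat) (E : vectType C)
  (act : E -> 'M[C]_M -> E) (ip : E -> E -> 'M[C]_M) : Prop :=
  [/\
      forall xi x y, in_blocks bout x -> in_blocks bout y ->
        act (act xi x) y = act xi (y *m x),
      forall xi eta x, in_blocks bout x -> act (xi + eta) x = act xi x + act eta x,
      forall xi x y, in_blocks bout x -> in_blocks bout y ->
        act xi (x + y) = act xi x + act xi y,
      forall (a : C) xi x, in_blocks bout x ->
        act (a *: xi) x = a *: act xi x /\ act xi (a *: x) = a *: act xi x &
      [/\ forall xi eta, in_blocks bout (ip xi eta),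
          forall (a : C) xi eta eta', ip xi (a *: eta + eta') = a *: ip xi eta + ip xi eta',
          forall xi eta x, in_blocks bout x -> ip xi (act eta x) = x *m ip xi eta,
          forall xi eta, ip eta xi = cadj (ip xi eta) &
          (forall xi, psd (ip xi xi)) /\ (forall xi, ip xi xi = 0 -> xi = 0)]].

(* The module M_Phi = H_in (x) O^op: an element mu represents
   \sum_i e_i (x) mu i, with all mu i in O. *)
Definition in_MPhi N M (bout : 'I_M -> nat) (mu : 'I_N -> 'M[C]_M) : Prop :=
  forall i, in_blocks bout (mu i).

(* <xi (x) a, eta (x) b> = <xi, eta> a^* * b  (O^op product) *)
Definition ip_MPhi N M (mu nu : 'I_N -> 'M[C]_M) : 'M[C]_M :=
  \sum_(i < N) nu i *m cadj (mu i).

(* C_Phi, the O^op-linear map with C_Phi(e_j (x) 1) = \sum_{i in block of j}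
   e_i (x) Phi(e_{ji}); extended O^op-linearly. *)
Definition C_Phi N M (bin : 'I_N -> nat) (Phi : 'M[C]_N -> 'M[C]_M)
  (mu : 'I_N -> 'M[C]_M) : 'I_N -> 'M[C]_M :=
  fun i => \sum_(j < N | bin j == bin i) mu j *m Phi (delta_mx j i).

(* Stinespring module (E, W) related to Phi: W in L(M_Phi, E) with W^* W = C_Phi. *)
Definition stinespring_module N M (bin : 'I_N -> nat) (bout : 'I_M -> nat)
  (Phi : 'M[C]_N -> 'M[C]_M) (E : vectType C) (act : E -> 'M[C]_M -> E)
  (ip : E -> E -> 'M[C]_M) (W : ('I_N -> 'M[C]_M) -> E) : Prop :=
  hilbert_Oop_module bout act ip /\
  exists Wadj : E -> ('I_N -> 'M[C]_M),
    [/\ forall xi, @in_MPhi N M bout (Wadj xi),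
        forall mu xi, @in_MPhi N M bout mu -> ip (W mu) xi = ip_MPhi mu (Wadj xi) &
        forall mu, @in_MPhi N M bout mu -> Wadj (W mu) = C_Phi bin Phi mu].

(* Minimality: range of W dense in E (E finite dimensional, so = E). *)
Definition stinespring_module_minimal N M (bout : 'I_M -> nat) (E : vectType C)
  (W : ('I_N -> 'M[C]_M) -> E) : Prop :=
  forall xi : E, exists mu, @in_MPhi N M bout mu /\ W mu = xi.

Definition inner_product (K : vectType C) (ipK : K -> K -> C) : Prop :=
  [/\ forall (a : C) x y z, ipK x (a *: y + z) = a * ipK x y + ipK x z,
      forall x y, ipK y x = Num.conj (ipK x y),
      forall x, 0 <= ipK x x &
      forall x, ipK x x = 0 -> x = 0].

Definition ip_col N (xi eta : 'cV[C]_N) : C := (cadj xi *m eta) 0 0.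

Definition stinespring_rep N M (bout : 'I_M -> nat) (Phis : 'M[C]_M -> 'M[C]_N)
  (K : vectType C) (ipK : K -> K -> C) (pi : 'M[C]_M -> K -> K)
  (V : 'cV[C]_N -> K) : Prop :=
  [/\ inner_product ipK,
      forall x, in_blocks bout x -> linear (pi x),
      [/\ forall (a : C) x y, in_blocks bout x -> in_blocks bout y ->
            pi (a *: x + y) =1 (fun k => a *: pi x k + pi y k),
          forall x y, in_blocks bout x -> in_blocks bout y ->
            pi (x *m y) =1 pi x \o pi y &
          forall x k k', in_blocks bout x -> ipK k (pi x k') = ipK (pi (cadj x) k) k'],
      linear V /\ (forall xi eta, ipK (V xi) (V eta) = ip_col xi eta) &
      forall x xi eta, in_blocks bout x ->
        ip_col xi (Phis x *m eta) = ipK (V xi) (pi x (V eta))].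

Definition stinespring_rep_minimal N M (bout : 'I_M -> nat)
  (K : vectType C) (pi : 'M[C]_M -> K -> K) (V : 'cV[C]_N -> K) : Prop :=
  forall k : K, exists s : seq ('M[C]_M * 'cV[C]_N),
    (forall p, p \in s -> in_blocks bout p.1) /\
    k = \sum_(p <- s) pi p.1 (V p.2).

End Defs.

From HB Require Import structures.
From mathcomp Require Import all_boot all_order all_algebra.
Import Order.TTheory GRing.Theory Num.Theory.
Local Open Scope ring_scope.
Set Implicit Arguments.

(* The trace of an [O^op]-valued inner product is a scalar inner product, and
   since [<xi, eta * x> = x <xi, eta>], cyclicity of the trace makes right
   multiplication by [x^*] the adjoint of right multiplication by [x].
   As [W^* W = C_Phi], the Gram matrix [<V xi, V eta>] is
   [<xi (x) 1, C_Phi (eta (x) 1)> = \sum_(i, j) conj(xi_i) eta_j Phi(e_ji)].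
   Its trace is [<xi, eta>] because [Phi] preserves traces, so [V] is an
   isometry; pairing it with [x] instead and using the Hilbert-Schmidt adjoint
   gives [<xi, Phi^*(x) eta>].  Finally [W mu = \sum_i V(e_i) * mu_i], so a [W]
   with full range makes the vectors [pi(T) V xi] span [E]. *)

Lemma mxtrace_sum (V : nmodType) n I (r : seq I) (P : pred I) (F : I -> 'M[V]_n) :
  \tr (\sum_(i <- r | P i) F i) = \sum_(i <- r | P i) \tr (F i).
Proof. exact: raddf_sum. Qed.

Section ConjugateTranspose.
Context {C : numClosedFieldType}.

Lemma cadjE m n (A : 'M[C]_(m, n)) i j : cadj A i j = (A j i)^*.
Proof. by rewrite !mxE. Qed.

Lemma cadjK m n (A : 'M[C]_(m, n)) : cadj (cadj A) = A.
Proof. by apply/matrixP => i j; rewrite !cadjE conjCK. Qed.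

Lemma cadjM m n p (A : 'M[C]_(m, n)) (B : 'M[C]_(n, p)) :
  cadj (A *m B) = cadj B *m cadj A.
Proof. by rewrite /cadj map_mxM trmx_mul. Qed.

Lemma cadjZ m n a (A : 'M[C]_(m, n)) : cadj (a *: A) = a^* *: cadj A.
Proof. by rewrite /cadj map_mxZ linearZ. Qed.

Lemma cadj0 m n : cadj (0 : 'M[C]_(m, n)) = 0.
Proof. by rewrite /cadj map_mx0 trmx0. Qed.

Lemma cadjD m n (A B : 'M[C]_(m, n)) : cadj (A + B) = cadj A + cadj B.
Proof. by rewrite /cadj map_mxD linearD. Qed.

Lemma cadj_sum m n I (r : seq I) (P : pred I) (F : I -> 'M[C]_(m, n)) :
  cadj (\sum_(i <- r | P i) F i) = \sum_(i <- r | P i) cadj (F i).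
Proof. exact: (big_morph _ (@cadjD m n) (@cadj0 m n)). Qed.

Lemma cadj_scalar n (a : C) : cadj (a%:M : 'M_n) = a^*%:M.
Proof. by rewrite /cadj map_scalar_mx tr_scalar_mx. Qed.

Lemma mxtrace_cadj n (A : 'M[C]_n) : \tr (cadj A) = (\tr A)^*.
Proof. by rewrite /cadj mxtrace_tr trace_map_mx. Qed.

Lemma mxtrace_mul_cadj n (A B : 'M[C]_n) :
  \tr (A *m cadj B) = (\tr (cadj A *m B))^*.
Proof. by rewrite -mxtrace_cadj cadjM cadjK mxtrace_mulC. Qed.

Lemma mxtrace_mul_delta n (A : 'M[C]_n) i j : \tr (A *m delta_mx j i) = A i j.
Proof.
rewrite /mxtrace (bigD1 i) //= big1 => [|k ki]; rewrite mxE.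
  rewrite (bigD1 j) //= big1 => [|l lj]; first by rewrite !mxE !eqxx mulr1 !addr0.
  by rewrite mxE (negPf lj) mulr0.
by rewrite big1 // => l _; rewrite mxE (negPf ki) andbF mulr0.
Qed.

Lemma mxtrace_delta n (i j : 'I_n) : \tr (delta_mx j i : 'M[C]_n) = (j == i)%:R.
Proof. by rewrite -[delta_mx j i]mul1mx mxtrace_mul_delta mxE eq_sym. Qed.

Lemma mxtrace_cadj_mul_self n (B : 'M[C]_n) :
  \tr (cadj B *m B) = \sum_i \sum_k `|B k i| ^+ 2.
Proof.
apply: eq_bigr => i _; rewrite mxE.
by apply: eq_bigr => k _; rewrite cadjE normCKC.
Qed.

End ConjugateTranspose.

Section PositiveMatrices.
Context {C : numClosedFieldType}.

Lemma psd_mxtrace_ge0 n (A : 'M[C]_n) : psd A -> 0 <= \tr A.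
Proof.
case=> B ->; rewrite mxtrace_cadj_mul_self.
by apply: sumr_ge0 => i _; apply: sumr_ge0 => k _; rewrite exprn_ge0.
Qed.

Lemma psd_mxtrace_eq0 n (A : 'M[C]_n) : psd A -> \tr A = 0 -> A = 0.
Proof.
case=> B ->; rewrite mxtrace_cadj_mul_self => sum0.
suff -> : B = 0 by rewrite mulmx0.
have normB_ge0 i k : 0 <= `|B k i| ^+ 2 by rewrite exprn_ge0.
apply/matrixP => k i; rewrite mxE; apply/eqP.
have /eqP := psumr_eq0P (fun k _ => normB_ge0 i k)
  (psumr_eq0P (fun i _ => sumr_ge0 _ (fun k _ => normB_ge0 i k)) sum0 (i := i) isT)
  (i := k) isT.
by rewrite expf_eq0 normr_eq0.
Qed.

End PositiveMatrices.

Section BlockAlgebra.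
Context {C : numClosedFieldType}.

Lemma in_blocks_cadj n lab (A : 'M[C]_n) :
  in_blocks lab A -> in_blocks lab (cadj A).
Proof. by move=> Ablk i j ij; rewrite cadjE Ablk ?conjC0 // => /esym. Qed.

Lemma in_blocksZ n lab a (A : 'M[C]_n) : in_blocks lab A -> in_blocks lab (a *: A).
Proof. by move=> Ablk i j ij; rewrite mxE Ablk // mulr0. Qed.

Lemma in_blocks_scalar n lab (a : C) : in_blocks lab (a%:M : 'M_n).
Proof. by move=> i j ij; rewrite mxE; case: eqP => // eij; rewrite eij in ij. Qed.

Lemma in_blocks_delta n (lab : 'I_n -> nat) i j :
  lab i = lab j -> in_blocks lab (delta_mx i j : 'M[C]_n).
Proof. by move=> lij k l kl; rewrite mxE; do 2!case: eqP => // ?; subst. Qed.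

End BlockAlgebra.

Section HilbertModule.
Context {C : numClosedFieldType} {M : nat} {bout : 'I_M -> nat} {E : vectType C}
  {act : E -> 'M[C]_M -> E} {ip : E -> E -> 'M[C]_M}.
Hypothesis HM : hilbert_Oop_module bout act ip.

Lemma ipDr xi u v : ip xi (u + v) = ip xi u + ip xi v.
Proof.
by case: HM => _ _ _ _ [_ ipZDr _ _ _]; have := ipZDr 1 xi u v; rewrite !scale1r.
Qed.

Lemma ipZr xi a u : ip xi (a *: u) = a *: ip xi u.
Proof.
have ip0r : ip xi 0 = 0 by apply/(addrI (ip xi 0)); rewrite -ipDr !addr0.
by case: HM => _ _ _ _ [_ ipZDr _ _ _]; rewrite -[a *: u]addr0 ipZDr ip0r addr0.
Qed.

Lemma ipC xi eta : ip eta xi = cadj (ip xi eta).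
Proof. by case: HM => _ _ _ _ [_ _ _ ip_sym _]. Qed.

Lemma ipDl xi u v : ip (u + v) xi = ip u xi + ip v xi.
Proof. by rewrite ipC ipDr cadjD -!ipC. Qed.

Lemma ipZl xi a u : ip (a *: u) xi = a^* *: ip u xi.
Proof. by rewrite ipC ipZr cadjZ -ipC. Qed.

Lemma ip_suml xi (I : Type) (r : seq I) (P : pred I) (F : I -> E) :
  ip (\sum_(i <- r | P i) F i) xi = \sum_(i <- r | P i) ip (F i) xi.
Proof.
have ip0l : ip 0 xi = 0 by rewrite -(scale0r (0 : E)) ipZl conjC0 scale0r.
exact: (big_morph (ip^~ xi) (ipDl xi) ip0l).
Qed.

Lemma ip_actr xi eta x : in_blocks bout x -> ip xi (act eta x) = x *m ip xi eta.
Proof. by case: HM => _ _ _ _ [_ _ ip_act _ _]; apply: ip_act. Qed.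

Lemma ip_actl xi eta x : in_blocks bout x -> ip (act eta x) xi = ip eta xi *m cadj x.
Proof. by move=> Ox; rewrite ipC ip_actr // cadjM -ipC. Qed.

Lemma ip_injl u v : (forall xi, ip u xi = ip v xi) -> u = v.
Proof.
case: HM => _ _ _ _ [_ _ _ _ [_ ip_definite]] uv.
have vu xi : ip xi u = ip xi v by rewrite ipC uv -ipC.
apply/eqP; rewrite -subr_eq0; apply/eqP/ip_definite.
by rewrite ipDr -scaleN1r ipZr scaleN1r vu scaleN1r subrr.
Qed.

Lemma trace_ip_inner_product : inner_product (fun xi eta => \tr (ip xi eta)).
Proof.
case: HM => _ _ _ _ [_ _ _ _ [ip_psd ip_definite]]; split.
- by move=> a xi u v; rewrite ipDr ipZr mxtraceD mxtraceZ.
- by move=> xi eta; rewrite ipC mxtrace_cadj.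
- by move=> xi; apply: psd_mxtrace_ge0.
- by move=> xi /(psd_mxtrace_eq0 (ip_psd xi)); apply: ip_definite.
Qed.

Lemma act_linear x : in_blocks bout x -> linear (fun xi => act xi x).
Proof.
by case: HM => _ actDl _ actZ _ Ox a u v; rewrite actDl // (actZ a u x Ox).1.
Qed.

Lemma act_star_morphism :
  let pi := fun x xi => act xi x in
  [/\ forall (a : C) x y, in_blocks bout x -> in_blocks bout y ->
        pi (a *: x + y) =1 (fun k => a *: pi x k + pi y k),
      forall x y, in_blocks bout x -> in_blocks bout y -> pi (x *m y) =1 pi x \o pi y &
      forall x k k', in_blocks bout x ->
        \tr (ip k (pi x k')) = \tr (ip (pi (cadj x) k) k')].
Proof.
case: HM => actM _ actDr actZ _ pi; rewrite {}/pi.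
split=> [a x y Ox Oy k | x y Ox Oy k | x k k' Ox].
- by rewrite actDr ?(actZ a k x Ox).2 //; apply: in_blocksZ.
- by rewrite /= actM.
- have Ox' := in_blocks_cadj Ox.
  by rewrite ip_actr // ip_actl // cadjK mxtrace_mulC.
Qed.

End HilbertModule.

Section StinespringModule.
Context {C : numClosedFieldType} {N M : nat} {bin : 'I_N -> nat} {bout : 'I_M -> nat}
  {Phi : 'M[C]_N -> 'M[C]_M} {E : vectType C} {act : E -> 'M[C]_M -> E}
  {ip : E -> E -> 'M[C]_M} {W : ('I_N -> 'M[C]_M) -> E} {Wadj : E -> ('I_N -> 'M[C]_M)}.
Hypothesis HM : hilbert_Oop_module bout act ip.
Hypothesis ip_W : forall mu xi, in_MPhi bout mu -> ip (W mu) xi = ip_MPhi mu (Wadj xi).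
Hypothesis Wadj_W : forall mu, in_MPhi bout mu -> Wadj (W mu) = C_Phi bin Phi mu.

(* [tensor1 eta] is [eta (x) 1] in [M_Phi = H_in (x) O^op], so [W \o tensor1] is the
   isometry [V] of the theorem. *)
Definition tensor1 (eta : 'cV[C]_N) : 'I_N -> 'M[C]_M := fun i => eta i 0 *: 1%:M.

Lemma in_MPhi_tensor1 eta : in_MPhi bout (tensor1 eta).
Proof. by move=> i; apply/in_blocksZ/in_blocks_scalar. Qed.

Lemma ip_W_tensor1_MPhi eta xi : ip (W (tensor1 eta)) xi = ip_MPhi (tensor1 eta) (Wadj xi).
Proof. exact/ip_W/in_MPhi_tensor1. Qed.

Lemma W_tensor1_linear : linear (fun eta => W (tensor1 eta)).
Proof.
move=> a u v; apply: (ip_injl HM) => xi.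
rewrite (ipDl HM) (ipZl HM) !ip_W_tensor1_MPhi /ip_MPhi scaler_sumr -big_split.
apply: eq_bigr => i _; rewrite /tensor1 !mxE scalerDl -scalerA.
by rewrite cadjD cadjZ mulmxDr -scalemxAr.
Qed.

Lemma ip_W_tensor1 xi eta : ip (W (tensor1 xi)) (W (tensor1 eta)) =
  \sum_i \sum_(j | bin j == bin i) (eta j 0 * (xi i 0)^*) *: Phi (delta_mx j i).
Proof.
rewrite ip_W_tensor1_MPhi Wadj_W; last exact: in_MPhi_tensor1.
apply: eq_bigr => i _; rewrite mulmx_suml; apply: eq_bigr => j _.
by rewrite /tensor1 !scalemx1 cadj_scalar mul_mx_scalar mul_scalar_mx scalerA mulrC.
Qed.

Lemma ip_W_tensor1_delta i xi : ip (W (tensor1 (delta_mx i 0))) xi = Wadj xi i.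
Proof.
rewrite ip_W_tensor1_MPhi /ip_MPhi (bigD1 i) //= big1 => [|k ki].
  by rewrite /tensor1 mxE !eqxx scale1r cadj_scalar conjC1 mulmx1 addr0.
by rewrite /tensor1 mxE (negPf ki) scale0r cadj0 mulmx0.
Qed.

(* [mu = \sum_i (e_i (x) 1) * mu i] and [W] is [O^op]-linear. *)
Lemma W_decomp mu : in_MPhi bout mu ->
  W mu = \sum_i act (W (tensor1 (delta_mx i 0))) (mu i).
Proof.
move=> Omu; apply: (ip_injl HM) => xi; rewrite ip_W // (ip_suml HM).
by apply: eq_bigr => i _; rewrite (ip_actl HM) // ip_W_tensor1_delta.
Qed.

Lemma stinespring_rep_minimal_W_tensor1 : stinespring_module_minimal bout W ->
  stinespring_rep_minimal bout (fun x xi => act xi x) (fun eta => W (tensor1 eta)).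
Proof.
move=> W_onto k; have [mu [Omu <-]] := W_onto k.
exists [seq (mu i, delta_mx i 0) | i <- index_enum 'I_N]; split.
  by move=> _ /mapP [i _ ->]; apply: Omu.
by rewrite big_map W_decomp.
Qed.

Hypothesis Phi_tr : forall x, in_blocks bin x -> \tr (Phi x) = \tr x.

Lemma mxtrace_Phi_delta i j : bin j = bin i -> \tr (Phi (delta_mx j i)) = (j == i)%:R.
Proof. by move=> bji; rewrite Phi_tr ?mxtrace_delta //; apply: in_blocks_delta. Qed.

Lemma trace_ip_W_tensor1 xi eta :
  \tr (ip (W (tensor1 xi)) (W (tensor1 eta))) = ip_col xi eta.
Proof.
rewrite ip_W_tensor1 mxtrace_sum /ip_col mxE; apply: eq_bigr => i _.
rewrite mxtrace_sum (bigD1 i) //= big1 => [|j /andP [/eqP bji ji]].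
  by rewrite mxtraceZ mxtrace_Phi_delta // eqxx mulr1 addr0 cadjE mulrC.
by rewrite mxtraceZ mxtrace_Phi_delta // (negPf ji) mulr0.
Qed.

Variable Phis : 'M[C]_M -> 'M[C]_N.
Hypothesis Phis_adj : hs_adjoint bin bout Phi Phis.

Lemma hs_adjoint_entry x i j : in_blocks bout x -> bin j = bin i ->
  \tr (x *m cadj (Phi (delta_mx j i))) = Phis x j i.
Proof.
move=> Ox bji; have [_ adj] := Phis_adj Ox.
rewrite mxtrace_mul_cadj -adj; last exact: in_blocks_delta.
by rewrite mxtrace_mul_delta cadjE conjCK.
Qed.

Lemma trace_ip_W_tensor1_act x xi eta : in_blocks bout x ->
  \tr (ip (W (tensor1 xi)) (act (W (tensor1 eta)) x)) = ip_col xi (Phis x *m eta).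
Proof.
move=> Ox; have [Phis_blk _] := Phis_adj Ox.
have entry i : \tr (x *m cadj (\sum_(j | bin j == bin i)
    (xi j 0 * (eta i 0)^*) *: Phi (delta_mx j i))) =
    \sum_j (xi j 0)^* * eta i 0 * Phis x j i.
  rewrite cadj_sum mulmx_sumr mxtrace_sum big_mkcond; apply: eq_bigr => j _.
  have [/eqP bji | bji] := boolP (bin j == bin i); last first.
    by rewrite Phis_blk ?mulr0 //; apply/eqP.
  by rewrite cadjZ -scalemxAr mxtraceZ hs_adjoint_entry // rmorphM /= conjCK.
rewrite (ip_actr HM) // (ipC HM) ip_W_tensor1 cadj_sum mulmx_sumr mxtrace_sum.
rewrite (eq_bigr _ (fun i _ => entry i)) exchange_big /ip_col mxE; apply: eq_bigr => j _.
by rewrite cadjE mxE mulr_sumr; apply: eq_bigr => i _; rewrite mulrAC mulrA.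
Qed.

End StinespringModule.

Unset Implicit Arguments.

Theorem proposition3p10 (C : numClosedFieldType) (N M : nat)
  (bin : 'I_N -> nat) (bout : 'I_M -> nat)
  (Phi : 'M[C]_N -> 'M[C]_M) (Phis : 'M[C]_M -> 'M[C]_N)
  (E : vectType C) (act : E -> 'M[C]_M -> E) (ip : E -> E -> 'M[C]_M)
  (W : ('I_N -> 'M[C]_M) -> E) :
  quantum_channel bin bout Phi ->
  hs_adjoint bin bout Phi Phis ->
  stinespring_module bin bout Phi act ip W ->
  let pi := fun (x : 'M[C]_M) (xi : E) => act xi x in
  let V := fun eta : 'cV[C]_N => W (fun i => eta i 0 *: (1%:M : 'M[C]_M)) in
  stinespring_rep bout Phis (fun xi eta => \tr (ip xi eta)) pi V /\
  (stinespring_module_minimal bout W -> stinespring_rep_minimal bout pi V).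
Proof.
move=> [_ _ Phi_tr _] Phis_adj [HM [Wadj [_ ip_W Wadj_W]]] pi V.
split; last exact: stinespring_rep_minimal_W_tensor1 HM ip_W.
split.
- exact: trace_ip_inner_product HM.
- exact: act_linear HM.
- exact: act_star_morphism HM.
- split; first exact: W_tensor1_linear HM ip_W.
  exact: trace_ip_W_tensor1 ip_W Wadj_W Phi_tr.
- by move=> x xi eta Ox; rewrite (trace_ip_W_tensor1_act HM ip_W Wadj_W Phis_adj).
Qed.
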